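(* Let $T(x)$ be an $N\times N$ matrix polynomial such that $T(x)^{-1}$ is also a matrix polynomial, and let $W,\widetilde W$ be weight matrices with $W(x)=T(x)\widetilde W(x)T(x)^*$. Then $\mathcal F_R(W)=T(x)\,\mathcal F_R(\widetilde W)\,T(x)^{-1}$. Moreover, an operator $\mathcal A\in\mathcal F_R(W)$ is $W$-symmetric if and only if $T(x)^{-1}\mathcal A\,T(x)\in\mathcal F_R(\widetilde W)$ is $\widetilde W$-symmetric.
   Context: Weight matrices are smooth, a.e. positive definite matrix functions on an interval with finite moments; standing assumption: each derivative $W^{(n)}$ decays exponentially at infinity and $W^{(n)}p_n$ has finite moments for some scalar polynomial $p_n$. $\langle P,Q\rangle_W=\int P(x)W(x)Q(x)^*dx$. Differential operators act on the right: $P\cdot\sum_j\partial^jF_j=\sum_j\partial^j(P)F_j$. An operator $\mathfrak D$ with polynomial coefficients is $W$-adjointable if there is an operator $\widetilde{\mathfrak D}$ with polynomial coefficients with $\langle P\cdot\mathfrak D,Q\rangle_W=\langle P,Q\cdot\widetilde{\mathfrak D}\rangle_W$ for all matrix polynomials $P,Q$; $\mathcal F_R(W)$ (right Fourier algebra) is the set of $W$-adjointable operators with polynomial coefficients (whose $W$-adjoint has polynomial coefficients). $\mathfrak D$ is $W$-symmetric if $\langle P\cdot\mathfrak D,Q\rangle_W=\langle P,Q\cdot\mathfrak D\rangle_W$ for all $P,Q$. Conjugation $T\mathcal BT^{-1}$ denotes the composition of the operators of multiplication by $T$, $\mathcal B$, and multiplication by $T^{-1}$. *)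

From HB Require Import structures.
From mathcomp Require Import all_boot all_order all_algebra.
From mathcomp Require Import all_classical all_reals all_analysis.
From mathcomp Require Import complex.
Set Implicit Arguments. Unset Strict Implicit. Unset Printing Implicit Defensive.
Import Order.TTheory GRing.Theory Num.Theory.
Import numFieldNormedType.Exports.
Local Open Scope classical_set_scope.
Local Open Scope ring_scope.
Local Open Scope complex_scope.

Section WeightDefs.
Variables (R : realType) (N : nat).
Local Notation C := R[i].

Definition ctr (m n : nat) (A : 'M[C]_(m, n)) : 'M[C]_(n, m) :=
  (map_mx (@conjc R) A)^T.

Definition mpeval (P : 'M[{poly C}]_N) (x : R) : 'M[C]_N :=
  map_mx (fun p => p.[x%:C]) P.

Definition cderiv (n : nat) (f : R -> C) : R -> C :=
  fun x => (derive1n n (fun t => complex.Re (f t)) x)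
           +i* (derive1n n (fun t => complex.Im (f t)) x).

Definition cint (D : set R) (f : R -> C) : C :=
  (\int[lebesgue_measure]_(x in D) complex.Re (f x))
  +i* (\int[lebesgue_measure]_(x in D) complex.Im (f x)).

Definition finite_moments (D : set R) (f : R -> C) : Prop :=
  forall k : nat,
    lebesgue_measure.-integrable D (fun x => (x ^+ k * complex.Re (f x))%:E) /\
    lebesgue_measure.-integrable D (fun x => (x ^+ k * complex.Im (f x))%:E).

Definition smooth_on (D : set R) (f : R -> C) : Prop :=
  forall (n : nat) (x : R), D x ->
    derivable (derive1n n (fun t => complex.Re (f t))) x 1 /\
    derivable (derive1n n (fun t => complex.Im (f t))) x 1.

(* Exponential decay at infinity (vacuous if D is bounded). *)
Definition exp_decay (D : set R) (f : R -> C) : Prop :=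
  exists c K M : R, 0 < c /\
    forall x, D x -> M <= `|x| ->
      Normc.normc (f x) <= K * expR (- (c * `|x|)).

Definition posdef (A : 'M[C]_N) : Prop :=
  A = ctr A /\
  forall v : 'rV[C]_N, v != 0 -> 0 < (v *m A *m ctr v) 0 0.

(* Weight matrix on the (open, nonempty) interval I, including the
   standing assumptions of the paper. *)
Definition weight_matrix (I : set R) (W : R -> 'M[C]_N) : Prop :=
  [/\ open I, is_interval I & I !=set0] /\
  [/\ (forall i j, smooth_on I (fun x => W x i j)),
      {ae lebesgue_measure, forall x, I x -> posdef (W x)},
      (forall i j, finite_moments I (fun x => W x i j)) &
      (forall n : nat,
         (forall i j, exp_decay I (cderiv n (fun x => W x i j))) /\
         exists p : {poly C}, p != 0 /\
           forall i j, finite_moments I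
             (fun x => cderiv n (fun y => W y i j) x * p.[x%:C]))].

Definition mip (I : set R) (W : R -> 'M[C]_N) (P Q : 'M[{poly C}]_N)
  : 'M[C]_N :=
  \matrix_(i, j) cint I (fun x => (mpeval P x *m W x *m ctr (mpeval Q x)) i j).

(* A differential operator with matrix polynomial coefficients
   sum_j d^j F_j, represented by the list [:: F_0; F_1; ...]. *)
Definition diffop := seq 'M[{poly C}]_N.

Definition dact (D : diffop) (P : 'M[{poly C}]_N) : 'M[{poly C}]_N :=
  \sum_(j < size D) map_mx (fun p => p^`(j)) P *m nth 0 D j.

Definition W_adjointable (I : set R) (W : R -> 'M[C]_N) (D : diffop) : Prop :=
  exists Dt : diffop, forall P Q : 'M[{poly C}]_N,
    mip I W (dact D P) Q = mip I W P (dact Dt Q).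

Definition in_FR (I : set R) (W : R -> 'M[C]_N) (D : diffop) : Prop :=
  W_adjointable I W D.

Definition W_symmetric (I : set R) (W : R -> 'M[C]_N) (D : diffop) : Prop :=
  forall P Q : 'M[{poly C}]_N, mip I W (dact D P) Q = mip I W P (dact D Q).

End WeightDefs.

From HB Require Import structures.
From mathcomp Require Import all_boot all_order all_algebra.
From mathcomp Require Import all_classical all_reals all_analysis.
From mathcomp Require Import complex.
Set Implicit Arguments. Unset Strict Implicit. Unset Printing Implicit Defensive.
Import Order.TTheory GRing.Theory Num.Theory.
Import numFieldNormedType.Exports.
Local Open Scope classical_set_scope.
Local Open Scope ring_scope.
Local Open Scope complex_scope.

(* Since W = T Wt T^*, one has <P, Q>_W = <P T, Q T>_Wt and
   <P, Q>_Wt = <P T^-1, Q T^-1>_W.  By the Leibniz rule, the conjugate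
   P |-> ((P S) . A) U of a differential operator A by matrix polynomials
   S, U is again a differential operator with polynomial coefficients, and
   the two identities carry an adjoint pair (A, A~) for one weight to the
   conjugated adjoint pair for the other.  Both statements follow, since
   conjugating by T^-1 and then by T gives back A. *)

Section DiffopAlgebra.
Variables (R : realType) (N : nat).
Local Notation mxpoly := 'M[{poly R[i]}]_N.
Implicit Types (P Q S U : mxpoly) (A D : diffop R N).

Definition derivn_mx (j : nat) (P : mxpoly) : mxpoly := map_mx (derivn j) P.

Lemma derivn_mx0 P : derivn_mx 0 P = P.
Proof. by apply/matrixP => a b; rewrite mxE derivn0. Qed.

Lemma derivn_mxSn j P : derivn_mx j (derivn_mx 1 P) = derivn_mx j.+1 P.
Proof. by apply/matrixP => a b; rewrite !mxE derivn1 derivSn. Qed.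

Lemma derivn_mxD j P Q : derivn_mx j (P + Q) = derivn_mx j P + derivn_mx j Q.
Proof. by apply/matrixP => a b; rewrite !mxE derivnD. Qed.

Lemma derivn_mx1M P Q :
  derivn_mx 1 (P *m Q) = derivn_mx 1 P *m Q + P *m derivn_mx 1 Q.
Proof.
apply/matrixP => a b; rewrite !mxE derivn1 raddf_sum -big_split /=.
by apply: eq_bigr => k _; rewrite !mxE !derivn1 derivM.
Qed.

Lemma dactE (D : diffop R N) P :
  dact D P = \sum_(j < size D) derivn_mx j P *m D`_j.
Proof. by []. Qed.

Lemma dact_widen n (D : diffop R N) P : (size D <= n)%N ->
  dact D P = \sum_(j < n) derivn_mx j P *m D`_j.
Proof.
move=> le_Dn; rewrite dactE (big_ord_widen _ (fun j => derivn_mx j P *m D`_j) le_Dn).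
rewrite big_mkcond /=; apply: eq_bigr => j _.
by case: ltnP => // ?; rewrite nth_default ?mulmx0.
Qed.

Lemma dact_nil P : dact [::] P = 0.
Proof. by rewrite dactE big_ord0. Qed.

Lemma dact_cons0 (D : diffop R N) P : dact (0 :: D) P = dact D (derivn_mx 1 P).
Proof.
rewrite dactE [RHS]dactE big_ord_recl /= mulmx0 add0r.
by apply: eq_bigr => j _; rewrite derivn_mxSn.
Qed.

Definition diffop_add (D1 D2 : diffop R N) : diffop R N :=
  mkseq (fun j => D1`_j + D2`_j) (maxn (size D1) (size D2)).

Lemma dact_add D1 D2 P : dact (diffop_add D1 D2) P = dact D1 P + dact D2 P.
Proof.
rewrite dactE size_mkseq (dact_widen _ (leq_maxl _ (size D2))).
rewrite (dact_widen _ (leq_maxr (size D1) _)) -big_split /=.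
by apply: eq_bigr => j _; rewrite nth_mkseq // mulmxDr.
Qed.

Definition diffop_mulmxr (D : diffop R N) (U : mxpoly) : diffop R N :=
  map (mulmx^~ U) D.

Lemma dact_mulmxr D U P : dact (diffop_mulmxr D U) P = dact D P *m U.
Proof.
rewrite !dactE size_map mulmx_suml; apply: eq_bigr => j _.
by rewrite (nth_map 0) // mulmxA.
Qed.

Fixpoint diffop_derivn_mulr (j : nat) (S : mxpoly) : diffop R N :=
  if j is j'.+1 then
    diffop_add (0 :: diffop_derivn_mulr j' S)
               (diffop_derivn_mulr j' (derivn_mx 1 S))
  else [:: S].

Lemma dact_derivn_mulr j S P :
  dact (diffop_derivn_mulr j S) P = derivn_mx j (P *m S).
Proof.
elim: j S P => [|j IHj] S P /=.
  by rewrite dactE big_ord1 !derivn_mx0.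
by rewrite dact_add dact_cons0 !IHj -derivn_mxD -derivn_mx1M derivn_mxSn.
Qed.

Definition diffop_conj (A : diffop R N) (S U : mxpoly) : diffop R N :=
  \big[diffop_add/[::]]_(j < size A) diffop_mulmxr (diffop_derivn_mulr j S) (A`_j *m U).

Lemma dact_conj A S U P : dact (diffop_conj A S U) P = dact A (P *m S) *m U.
Proof.
rewrite dactE mulmx_suml.
apply: (big_rec2 (fun D M => dact D P = M)) => [|j D M _ /= <-].
  exact: dact_nil.
by rewrite dact_add dact_mulmxr dact_derivn_mulr mulmxA.
Qed.

End DiffopAlgebra.

Lemma mulmxKr (R : pzRingType) m n p (P : 'M[R]_(m, n)) (S : 'M[R]_(n, p))
    (U : 'M[R]_(p, n)) :
  S *m U = 1%:M -> P *m S *m U = P.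
Proof. by move=> SU; rewrite -mulmxA SU mulmx1. Qed.

Section WeightConjugation.
Variables (R : realType) (N : nat) (I : set R).
Local Notation mxpoly := 'M[{poly R[i]}]_N.

Lemma mpevalM (P Q : mxpoly) x : mpeval (P *m Q) x = mpeval P x *m mpeval Q x.
Proof. exact: (map_mxM (horner_eval x%:C)). Qed.

Lemma ctrM m n p (A : 'M[R[i]]_(m, n)) (B : 'M[R[i]]_(n, p)) :
  ctr (A *m B) = ctr B *m ctr A.
Proof. by rewrite /ctr map_mxM trmx_mul. Qed.

Lemma eq_mip (W1 W2 : R -> 'M[R[i]]_N) P1 Q1 P2 Q2 :
  (forall x, I x -> mpeval P1 x *m W1 x *m ctr (mpeval Q1 x) =
                    mpeval P2 x *m W2 x *m ctr (mpeval Q2 x)) ->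
  mip I W1 P1 Q1 = mip I W2 P2 Q2.
Proof.
move=> eq_integrand; apply: eq_mx => a b; rewrite /cint /Rintegral.
by apply: f_equal2; apply: congr1; apply: eq_integral => x /[!inE] Ix;
  rewrite eq_integrand.
Qed.

Lemma mip_congruence (W Wt : R -> 'M[R[i]]_N) (T : mxpoly) :
  (forall x, I x -> W x = mpeval T x *m Wt x *m ctr (mpeval T x)) ->
  forall P Q, mip I W P Q = mip I Wt (P *m T) (Q *m T).
Proof.
move=> defW P Q; apply: eq_mip => x Ix.
by rewrite defW // !mpevalM ctrM !mulmxA.
Qed.

Definition W_adjoint (W : R -> 'M[R[i]]_N) (A At : diffop R N) : Prop :=
  forall P Q, mip I W (dact A P) Q = mip I W P (dact At Q).

Lemma W_adjoint_ext W (A A' At At' : diffop R N) :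
  dact A =1 dact A' -> dact At =1 dact At' ->
  W_adjoint W A At -> W_adjoint W A' At'.
Proof. by move=> eqA eqAt adjA P Q; rewrite -eqA -eqAt. Qed.

Lemma W_adjoint_conj (W1 W2 : R -> 'M[R[i]]_N) (S U : mxpoly) :
  (forall P Q, mip I W2 P Q = mip I W1 (P *m S) (Q *m S)) ->
  U *m S = 1%:M ->
  forall A At, W_adjoint W1 A At ->
    W_adjoint W2 (diffop_conj A S U) (diffop_conj At S U).
Proof.
move=> mipW2 US A At adjA P Q.
by rewrite !dact_conj !mipW2 !mulmxKr // adjA.
Qed.

End WeightConjugation.

Theorem proposition3p4 (R : realType) (N : nat) (I : set R)
  (W Wt : R -> 'M[R[i]]_N) (T Ti : 'M[{poly R[i]}]_N) :
  T *m Ti = 1%:M -> Ti *m T = 1%:M ->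
  weight_matrix I W -> weight_matrix I Wt ->
  (forall x, I x -> W x = mpeval T x *m Wt x *m ctr (mpeval T x)) ->
  (* F_R(W) = T F_R(Wt) T^{-1} *)
  (forall A : diffop R N,
     in_FR I W A <->
     exists B : diffop R N, in_FR I Wt B /\
       forall P, dact A P = dact B (P *m T) *m Ti) /\
  (* A in F_R(W) is W-symmetric iff T^{-1} A T in F_R(Wt) is Wt-symmetric *)
  (forall A B : diffop R N,
     in_FR I W A ->
     (forall P, dact B P = dact A (P *m Ti) *m T) ->
     in_FR I Wt B /\ (W_symmetric I W A <-> W_symmetric I Wt B)).
Proof.
move=> TTi TiT _ _ defW.
have mipW := mip_congruence defW.
have mipWt P Q : mip I Wt P Q = mip I W (P *m Ti) (Q *m Ti).
  by rewrite mipW !mulmxKr.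
have toWt := W_adjoint_conj mipWt TTi.
have toW := W_adjoint_conj mipW TiT.
split=> [A | A B [At adjA] defB].
  split=> [[At adjA] | [B [[Bt adjB] defA]]].
    exists (diffop_conj A Ti T); split.
      by exists (diffop_conj At Ti T); apply: toWt.
    by move=> P; rewrite dact_conj !mulmxKr.
  exists (diffop_conj Bt T Ti).
  by apply: W_adjoint_ext (toW _ _ adjB) => P //; rewrite dact_conj defA.
have conjA : dact (diffop_conj A Ti T) =1 dact B by move=> P; rewrite dact_conj defB.
split.
  by exists (diffop_conj At Ti T); apply: W_adjoint_ext conjA _ (toWt _ _ adjA).
split=> [symA | symB]; first exact: (W_adjoint_ext conjA conjA (toWt _ _ symA)).
by apply: W_adjoint_ext (toW _ _ symB) => P; rewrite dact_conj defB !mulmxKr.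
Qed.
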